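(* For both the overlap preference model and the cost preference model, and for every pair $\langle R,F\rangle$ of a shortlisting rule $R$ and an allocation rule $F$: (i) if $\langle R,F\rangle$ is R-FSSP-O then it is R-FSSP-A and R-FSSP-P; (ii) if $\langle R,F\rangle$ is U-FSSP-O then it is U-FSSP-A and U-FSSP-P; (iii) for each type of manipulation X $\in\{$P, O, A$\}$, if $\langle R,F\rangle$ is R-FSSP-X then it is U-FSSP-X.
   Context: Let $\mathbb{P}=\{p_1,\dots,p_m\}$ be a finite set of projects, $c:\mathbb{P}\to\mathbb{N}$ a cost function with $c(P)=\sum_{p\in P}c(p)$, $B\in\mathbb{N}$ a budget with $c(p)\le B$ for all $p$; agents $\mathcal{N}=\{1,\dots,n\}$. Tie-breaking: for nonempty $P\subseteq\mathbb{P}$, $T(P)$ is its lowest-index project; for a nonempty family $\mathfrak{P}$ of subsets of $\mathbb{P}$, $T(\mathfrak{P})$ is the unique $P\in\mathfrak{P}$ such that for all $P'\in\mathfrak{P}\setminus\{P\}$ the lowest-index project of $(P\setminus P')\cup(P'\setminus P)$ lies in $P$. Greedy selection $\mathit{GREED}(P,\gg)$, for $P\subseteq\mathbb{P}$ and a strict linear order $\gg$ on $P$, examines projects in the order $\gg$ and selects a project iff doing so keeps the total cost of selected projects at most $B$. Shortlisting stage: a shortlisting instance is $\langle\mathbb{P},c,B\rangle$; a shortlisting profile is $\boldsymbol{P}=(P_1,\dots,P_n)$, $P_i\subseteq\mathbb{P}$, $\bigcup\boldsymbol{P}=P_1\cup\dots\cup P_n$; $(\boldsymbol{P}_{-i},P_i')$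 is $\boldsymbol{P}$ with $P_i$ replaced by $P_i'$; a shortlisting rule $R$ outputs $R(I,\boldsymbol{P})\subseteq\bigcup\boldsymbol{P}$. Each agent $i$ has an awareness set $C_i\subseteq\mathbb{P}$; $\boldsymbol{C}=(C_1,\dots,C_n)$. Allocation stage: an allocation instance is $\langle\mathcal{P},c,B\rangle$ with $\mathcal{P}\subseteq\mathbb{P}$; a profile is $\boldsymbol{A}=(A_1,\dots,A_n)$ with $A_i\subseteq\mathcal{P}$; a set $A\subseteq\mathcal{P}$ is feasible if $c(A)\le B$; an allocation rule $F$ maps $(I,\boldsymbol{A})$ to a feasible $F(I,\boldsymbol{A})\subseteq\mathcal{P}$. Preferences: each agent $i$ has a strict linear order $\rhd_i$ on $\mathbb{P}$; for $\mathcal{P}\subseteq\mathbb{P}$, $\mathit{top}_i(\mathcal{P})=\mathit{GREED}(\mathcal{P},\rhd_i|_{\mathcal{P}})$ and $\boldsymbol{top}(\mathcal{P})=(\mathit{top}_1(\mathcal{P}),\dots,\mathit{top}_n(\mathcal{P}))$. For a set $P\subseteq\mathbb{P}$, under the overlap model $A\succeq_P A'$ iff $|A\cap P|\ge|A'\cap P|$; under the cost model $A\succeq_P A'$ iff $c(A\cap P)\ge c(A'\cap P)$; $\succ_P$ is the strict part. For a relation $\succ$ and a family $\mathfrak{P}$, $\mathit{best}(\succ,\mathfrak{P})$ is the set of elements of $\mathfrak{P}$ undominated w.r.t. $\succ$. Best response: for an allocation instance $I=\langle\mathcal{P},c,B\rangle$, profile $\boldsymbol{A}$ and agent $i$, $A_i^\star(I,\boldsymbol{A})=T(\mathit{best}(\succ_{\mathit{top}_i(\mathcal{P})},\{F(I,(\boldsymbol{A}_{-i},A_i'))\mid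 A_i'\subseteq\mathcal{P}\}))$ and $F^\star(I,\boldsymbol{A})=F(I,(\boldsymbol{A}_{-i},A_i^\star(I,\boldsymbol{A})))$. Manipulation: given $R$, $F$, a shortlisting instance $I_1$, profile $\boldsymbol{P}$, agent $i$ and $P_i'\subseteq\mathbb{P}$, let $\mathcal{P}=R(I_1,\boldsymbol{P})$, $\mathcal{P}'=R(I_1,(\boldsymbol{P}_{-i},P_i'))$, $I_2=\langle\mathcal{P},c,B\rangle$, $I_2'=\langle\mathcal{P}',c,B\rangle$, and $Q=\mathit{top}_i(\mathcal{P}\cup\mathcal{P}')$. $P_i'$ is a successful pessimistic manipulation if for all profiles $\boldsymbol{A}$ on $\mathcal{P}$ and $\boldsymbol{A}'$ on $\mathcal{P}'$, $F^\star(I_2',\boldsymbol{A}')\succeq_Q F^\star(I_2,\boldsymbol{A})$, strictly for at least one pair; a successful optimistic manipulation if for at least one $\boldsymbol{A}$ on $\mathcal{P}$ and one $\boldsymbol{A}'$ on $\mathcal{P}'$, $F^\star(I_2',\boldsymbol{A}')\succ_Q F^\star(I_2,\boldsymbol{A})$; a successful anticipative manipulation if $F^\star(I_2',\boldsymbol{top}(\mathcal{P}'))\succ_Q F^\star(I_2,\boldsymbol{top}(\mathcal{P}))$. FSSP: for a preference model, $\langle R,F\rangle$ is R-FSSP w.r.t. a manipulation type if for every shortlisting instance, every awareness profile $\boldsymbol{C}$, every shortlisting profile $\boldsymbol{P}$ with $P_{i'}\subseteq C_{i'}$ for all $i'$, and every agent $i$, there is no $P_i'\subseteq C_i$ such that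 submitting $P_i'$ instead of $\mathit{top}_i(C_i)$ (i.e., moving from $(\boldsymbol{P}_{-i},\mathit{top}_i(C_i))$ to $(\boldsymbol{P}_{-i},P_i')$) is a successful manipulation of that type for $i$. $\langle R,F\rangle$ is U-FSSP w.r.t. that type if the same holds with $P_i'\subseteq C_i\cup\bigcup\boldsymbol{P}$ and with $\mathit{top}_i(C_i\cup\bigcup\boldsymbol{P})$ in place of $\mathit{top}_i(C_i)$. Suffixes -P, -O, -A denote pessimistic, optimistic and anticipative manipulation. *)

From mathcomp Require Import all_boot all_fingroup.
Set Implicit Arguments. Unset Strict Implicit. Unset Printing Implicit Defensive.

Section Defs.
Variables (m n : nat).

Definition project := 'I_m.
Definition agent := 'I_n.
Definition profile := {ffun 'I_n -> {set 'I_m}}.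

Definition cost (c : 'I_m -> nat) (A : {set 'I_m}) : nat := \sum_(p in A) c p.

Definition upd (Ps : profile) (i : 'I_n) (X : {set 'I_m}) : profile :=
  [ffun j => if j == i then X else Ps j].

Definition bigU (Ps : profile) : {set 'I_m} := \bigcup_(j < n) Ps j.

Definition is_lowest (p : 'I_m) (S : {set 'I_m}) : bool :=
  (p \in S) && [forall q in S, (p <= q)%N].

(* T on families of sets: the unique P in fam such that for every other P'
   the lowest-index project of the symmetric difference lies in P
   (default set0 if none exists, which happens only for empty fam). *)
Definition tieT (fam : {set {set 'I_m}}) : {set 'I_m} :=
  odflt set0 [pick P in fam |
    [forall P' in fam, (P' != P) ==>
       [exists p in P, is_lowest p ((P :\: P') :|: (P' :\: P))]]].

(* A strict linear order on projects is represented by a ranking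
   permutation: p |> q  iff  rk p < rk q. *)
Definition pref_order := {perm 'I_m}.

Definition greed (c : 'I_m -> nat) (B : nat) (rk : pref_order) (P : {set 'I_m})
  : {set 'I_m} :=
  foldl (fun acc p => if (cost c acc + c p <= B)%N then p |: acc else acc)
        set0 (sort (fun p q => (rk p <= rk q)%N) (enum P)).

Definition top (c : 'I_m -> nat) (B : nat) (prefs : 'I_n -> pref_order)
  (i : 'I_n) (P : {set 'I_m}) : {set 'I_m} := greed c B (prefs i) P.

Definition top_profile (c : 'I_m -> nat) (B : nat) (prefs : 'I_n -> pref_order)
  (P : {set 'I_m}) : profile := [ffun i => top c B prefs i P].

End Defs.

Inductive pref_model := Overlap | CostModel.

Section Pref.
Variables (m n : nat).

Definition succeq (md : pref_model) (c : 'I_m -> nat) (P A A' : {set 'I_m}) : bool :=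
  match md with
  | Overlap => (#|A' :&: P| <= #|A :&: P|)%N
  | CostModel => (cost c (A' :&: P) <= cost c (A :&: P))%N
  end.

Definition succ md c P A A' : bool := succeq md c P A A' && ~~ succeq md c P A' A.

Definition best md c P (fam : {set {set 'I_m}}) : {set {set 'I_m}} :=
  [set A in fam | [forall A' in fam, ~~ succ md c P A' A]].

Definition shortlisting_rule := ('I_m -> nat) -> nat -> profile m n -> {set 'I_m}.
Definition allocation_rule :=
  {set 'I_m} -> ('I_m -> nat) -> nat -> profile m n -> {set 'I_m}.

Definition valid_instance (c : 'I_m -> nat) (B : nat) := forall p, (c p <= B)%N.

Definition valid_shortlisting_rule (R : shortlisting_rule) :=
  forall c B Ps, valid_instance c B -> R c B Ps \subset bigU Ps.

Definition profile_on (calP : {set 'I_m}) (A : profile m n) :=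
  forall j, A j \subset calP.

Definition valid_allocation_rule (F : allocation_rule) :=
  forall calP c B A, valid_instance c B -> profile_on calP A ->
    F calP c B A \subset calP /\ (cost c (F calP c B A) <= B)%N.

Variables (md : pref_model) (F : allocation_rule) (c : 'I_m -> nat) (B : nat)
  (prefs : 'I_n -> pref_order m).

Definition best_resp (calP : {set 'I_m}) (A : profile m n) (i : 'I_n) : {set 'I_m} :=
  tieT (best md c (top c B prefs i calP)
          [set F calP c B (upd A i A') | A' in powerset calP]).

Definition Fstar (calP : {set 'I_m}) (A : profile m n) (i : 'I_n) : {set 'I_m} :=
  F calP c B (upd A i (best_resp calP A i)).

Variables (R : shortlisting_rule) (Ps : profile m n) (i : 'I_n) (Pi' : {set 'I_m}).

Definition calP0 := R c B Ps.
Definition calP1 := R c B (upd Ps i Pi').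
Definition Qset := top c B prefs i (calP0 :|: calP1).

Definition pess_manip : Prop :=
  (forall A A', profile_on calP0 A -> profile_on calP1 A' ->
     succeq md c Qset (Fstar calP1 A' i) (Fstar calP0 A i)) /\
  (exists A A', [/\ profile_on calP0 A, profile_on calP1 A' &
     succ md c Qset (Fstar calP1 A' i) (Fstar calP0 A i)]).

Definition opt_manip : Prop :=
  exists A A', [/\ profile_on calP0 A, profile_on calP1 A' &
     succ md c Qset (Fstar calP1 A' i) (Fstar calP0 A i)].

Definition ant_manip : Prop :=
  succ md c Qset (Fstar calP1 (top_profile c B prefs calP1) i)
                 (Fstar calP0 (top_profile c B prefs calP0) i).

End Pref.

Inductive manip_type := Pess | Opt | Ant.

Definition manip {m n} (X : manip_type) md (R : shortlisting_rule m n)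
  (F : allocation_rule m n) c B prefs Ps i Pi' : Prop :=
  match X with
  | Pess => pess_manip md F c B prefs R Ps i Pi'
  | Opt => opt_manip md F c B prefs R Ps i Pi'
  | Ant => ant_manip md F c B prefs R Ps i Pi'
  end.

Definition R_FSSP {m n} (X : manip_type) md (R : shortlisting_rule m n)
  (F : allocation_rule m n) : Prop :=
  forall (c : 'I_m -> nat) (B : nat), valid_instance c B ->
  forall (prefs : 'I_n -> pref_order m) (C : profile m n) (Ps : profile m n),
  (forall j, Ps j \subset C j) ->
  forall (i : 'I_n) (Pi' : {set 'I_m}), Pi' \subset C i ->
  ~ manip X md R F c B prefs (upd Ps i (top c B prefs i (C i))) i Pi'.

Definition U_FSSP {m n} (X : manip_type) md (R : shortlisting_rule m n)
  (F : allocation_rule m n) : Prop :=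
  forall (c : 'I_m -> nat) (B : nat), valid_instance c B ->
  forall (prefs : 'I_n -> pref_order m) (C : profile m n) (Ps : profile m n),
  (forall j, Ps j \subset C j) ->
  forall (i : 'I_n) (Pi' : {set 'I_m}), Pi' \subset C i :|: bigU Ps ->
  ~ manip X md R F c B prefs (upd Ps i (top c B prefs i (C i :|: bigU Ps))) i Pi'.

From Pilot Require Import Defs.
From mathcomp Require Import all_boot all_fingroup.

(* An anticipative manipulation is an optimistic one witnessed by the truthful
   profiles top(P) and top(P'), and a pessimistic manipulation contains an
   optimistic witness by definition; so excluding optimistic manipulations
   excludes the other two.  A U-manipulation under awareness profile C is an
   R-manipulation under the awareness profile in which agent i is aware of
   C_i together with all submitted projects. *)

Lemma greed_sub m (c : 'I_m -> nat) (B : nat) (rk : pref_order m)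
    (P : {set 'I_m}) :
  greed c B rk P \subset P.
Proof.
rewrite /greed; set s := sort _ _.
have sP : {subset s <= P} by move=> x; rewrite mem_sort mem_enum.
elim: s sP (set0 : {set 'I_m}) (sub0set P) => [|x s IHs] //= sP acc accP.
apply: IHs => [y sy|]; first by apply: sP; rewrite inE sy orbT.
case: ifP => // _; rewrite subUset sub1set accP andbT.
by apply: sP; rewrite inE eqxx.
Qed.

Lemma top_profile_on m n (c : 'I_m -> nat) (B : nat)
    (prefs : 'I_n -> pref_order m) (P : {set 'I_m}) :
  profile_on P (top_profile c B prefs P).
Proof. by move=> j; rewrite ffunE; apply: greed_sub. Qed.

Section Weaken.
Variables (m n : nat) (md : pref_model).
Variables (R : shortlisting_rule m n) (F : allocation_rule m n).

Lemma ant_manip_opt c B prefs Ps i Pi' :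
  ant_manip md F c B prefs R Ps i Pi' -> opt_manip md F c B prefs R Ps i Pi'.
Proof.
move=> ant; exists (top_profile c B prefs (calP0 c B R Ps)),
  (top_profile c B prefs (calP1 c B R Ps i Pi')).
by split=> //; apply: top_profile_on.
Qed.

Lemma pess_manip_opt c B prefs Ps i Pi' :
  pess_manip md F c B prefs R Ps i Pi' -> opt_manip md F c B prefs R Ps i Pi'.
Proof. by case. Qed.

Definition manip_implies (X Y : manip_type) : Prop :=
  forall c B prefs Ps i Pi',
    manip X md R F c B prefs Ps i Pi' -> manip Y md R F c B prefs Ps i Pi'.

Lemma opt_implied X : manip_implies X Opt.
Proof.
case: X => c B prefs Ps i Pi'; [exact: pess_manip_opt | by [] | exact: ant_manip_opt].
Qed.

Lemma R_FSSP_weaken X Y :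
  manip_implies X Y -> R_FSSP Y md R F -> R_FSSP X md R F.
Proof.
move=> XY fsspY c B cB prefs C Ps PsC i Pi' Pi'C /XY.
exact: fsspY PsC _ _ Pi'C.
Qed.

Lemma U_FSSP_weaken X Y :
  manip_implies X Y -> U_FSSP Y md R F -> U_FSSP X md R F.
Proof.
move=> XY fsspY c B cB prefs C Ps PsC i Pi' Pi'C /XY.
exact: fsspY PsC _ _ Pi'C.
Qed.

Lemma R_FSSP_U_FSSP X : R_FSSP X md R F -> U_FSSP X md R F.
Proof.
move=> fssp c B cB prefs C Ps PsC i Pi' Pi'C.
pose C' := upd C i (C i :|: Defs.bigU Ps).
have C'i : C' i = C i :|: Defs.bigU Ps by rewrite ffunE eqxx.
have PsC' j : Ps j \subset C' j.
  rewrite ffunE; case: eqP => [->|_]; last exact: PsC.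
  exact: subset_trans (PsC i) (subsetUl _ _).
by have := fssp c B cB prefs C' Ps PsC' i Pi'; rewrite C'i; apply.
Qed.

End Weaken.

Theorem proposition4 (m n : nat) (md : pref_model)
  (R : shortlisting_rule m n) (F : allocation_rule m n) :
  valid_shortlisting_rule R -> valid_allocation_rule F ->
  [/\ (R_FSSP Opt md R F -> R_FSSP Ant md R F /\ R_FSSP Pess md R F),
      (U_FSSP Opt md R F -> U_FSSP Ant md R F /\ U_FSSP Pess md R F) &
      (forall X : manip_type, R_FSSP X md R F -> U_FSSP X md R F)].
Proof.
move=> _ _; split.
- by move=> fssp; split; apply: R_FSSP_weaken fssp; apply: opt_implied.
- by move=> fssp; split; apply: U_FSSP_weaken fssp; apply: opt_implied.
- exact: R_FSSP_U_FSSP.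
Qed.
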